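(* Let $a,b\in\mathbb{M}_n$ with $0\le a,b\le 1$ be strict elements such that $a$ is absolutely compatible with $b$. Then $n$ is even, say $n=2k$, and there exist $a_1,\dots,a_k,b_1,\dots,b_k\in\mathcal{S}$ and a unitary $w\in\mathbb{M}_n$ such that $a_i$ is absolutely compatible with $b_i$ for every $i=1,\dots,k$, and $$a=w^*(a_1\oplus\cdots\oplus a_k)w,\qquad b=w^*(b_1\oplus\cdots\oplus b_k)w.$$
   Context: $\mathbb{M}_n$ is the algebra of $n\times n$ complex matrices. For $x$ in it, $|x|=(x^*x)^{1/2}$. Elements $0\le a,b\le 1$ are absolutely compatible if $|a-b|+|1-a-b|=1$. For positive $x$, $r(x)$ is its range projection; for $0\le a\le 1$, $s(a)=1-r(1-a)$ and $n(a)=1-r(a)$; a non-zero $0\le a\le1$ is strict if $s(a)=0=n(a)$. $\mathcal{S}=\{c\in\mathbb{M}_2: 0\le c\le 1,\ \operatorname{trace}(c)=1,\ 0<\det(c)<\tfrac14\}$, with $\operatorname{trace}$ the non-normalized trace. *)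

From HB Require Import structures.
From Stdlib Require Import ClassicalEpsilon.
From mathcomp Require Import all_boot all_order all_algebra.
From mathcomp Require Import sesquilinear spectral.
From mathcomp Require Import complex.
From mathcomp Require Import reals.
Set Implicit Arguments.
Unset Strict Implicit.
Unset Printing Implicit Defensive.
Import Order.TTheory GRing.Theory Num.Theory.
Local Open Scope ring_scope.
Local Open Scope sesquilinear_scope.

Section Defs.
Variable C : numClosedFieldType.

Definition mx_pos n (x : 'M[C]_n) : Prop :=
  x ^t* = x /\ forall v : 'cV[C]_n, 0 <= (v ^t* *m x *m v) 0 0.

Definition mx_le n (x y : 'M[C]_n) : Prop := mx_pos (y - x).

Definition mx_effect n (a : 'M[C]_n) : Prop := mx_pos a /\ mx_le a 1%:M.

Definition mx_abs n (x : 'M[C]_n) : 'M[C]_n :=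
  epsilon (inhabits 0) (fun s => mx_pos s /\ s *m s = x ^t* *m x).

Definition abs_compatible n (a b : 'M[C]_n) : Prop :=
  mx_abs (a - b) + mx_abs (1%:M - a - b) = 1%:M.

(* range projection r(x): the orthogonal projection onto the range
   (column space) of x; the column space of p is the row space of p^T. *)
Definition range_proj n (x : 'M[C]_n) : 'M[C]_n :=
  epsilon (inhabits 0)
    (fun p => p ^t* = p /\ p *m p = p /\ (p^T == x^T)%MS).

Definition s_proj n (a : 'M[C]_n) : 'M[C]_n := 1%:M - range_proj (1%:M - a).
Definition n_proj n (a : 'M[C]_n) : 'M[C]_n := 1%:M - range_proj a.

Definition strict n (a : 'M[C]_n) : Prop :=
  a != 0 /\ s_proj a = 0 /\ n_proj a = 0.

Definition in_S (c : 'M[C]_2) : Prop :=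
  mx_effect c /\ \tr c = 1 /\ 0 < \det c /\ \det c < 4%:R^-1.

(* block diagonal matrix A 0 (+) A 1 (+) ... with 2x2 blocks, of size n:
   entry (i, j) lies in block i./2 if i./2 = j./2, and is 0 otherwise. *)
Definition dsum2 n (A : nat -> 'M[C]_2) : 'M[C]_n :=
  \matrix_(i < n, j < n)
    if i./2 == j./2 then A i./2 (inord (odd i)) (inord (odd j)) else 0.

End Defs.

From HB Require Import structures.
From Stdlib Require Import ClassicalEpsilon.
From mathcomp Require Import all_boot all_order all_algebra.
From mathcomp Require Import sesquilinear spectral complex reals.
From mathcomp Require Import ring.
Import Order.TTheory GRing.Theory Num.Theory.
Set Implicit Arguments.
Unset Strict Implicit.
Unset Printing Implicit Defensive.
Local Open Scope ring_scope.
Local Open Scope sesquilinear_scope.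

(* Put u := |a - b|.  Absolute compatibility says |1 - a - b| = 1 - u, so
   x := a - b and y := 1 - a - b satisfy x^2 = u^2 and y^2 = (1 - u)^2, and u,
   being the positive square root of x^2, commutes with x, y, a and b.  Then
   u, x and xy + yx commute pairwise and have a common eigenvector v.
   Strictness of a and b forbids v to be an eigenvector of y as well (the
   eigenvalue of a or of b on v would be 0 or 1), so span(v, vy) is a plane
   invariant under a, b and u, on which u is scalar.  The compressions of a
   and b to this plane lie in S and are absolutely compatible (a non-scalar
   2 x 2 matrix with scalar square has trace 0), while the compressions to its
   orthogonal complement satisfy the same hypotheses; induct on n. *)

Section PositiveMatrices.
Variable C : numClosedFieldType.
Implicit Types (c : C).

Lemma trmxC_mul m n p (A : 'M[C]_(m, n)) (B : 'M[C]_(n, p)) :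
  (A *m B)^t* = B^t* *m A^t*.
Proof. by rewrite trmx_mul map_mxM. Qed.

Lemma trmxC_sub m n (A B : 'M[C]_(m, n)) : (A - B)^t* = A^t* - B^t*.
Proof. by rewrite linearB map_mxB. Qed.

Lemma trmxC1 n : (1%:M : 'M[C]_n)^t* = 1%:M.
Proof. by rewrite tr_scalar_mx map_scalar_mx rmorph1. Qed.

Lemma cV_norm_ge0 n (w : 'cV[C]_n) : 0 <= (w^t* *m w) 0 0.
Proof.
rewrite mxE; apply: sumr_ge0 => k _; rewrite !mxE mulrC; exact: mul_conjC_ge0.
Qed.

Lemma cV_norm_eq0 n (w : 'cV[C]_n) : (w^t* *m w) 0 0 = 0 -> w = 0.
Proof.
have w_ge0 k : true -> 0 <= (w^t*) 0 k * w k 0.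
  by rewrite !mxE mulrC mul_conjC_ge0.
rewrite mxE => /psumr_eq0P w0; apply/matrixP => i j.
by have /eqP := w0 w_ge0 i isT; rewrite ord1 !mxE mulrC mul_conjC_eq0 => /eqP.
Qed.

Lemma mx_pos_gram m n (M : 'M[C]_(m, n)) : mx_pos (M^t* *m M).
Proof.
split; first by rewrite trmxC_mul trmxCK.
by move=> v; rewrite -mulmxA -[_ *m v]mulmxA mulmxA -trmxC_mul cV_norm_ge0.
Qed.

Lemma mx_pos_conj n m (M : 'M[C]_n) (P : 'M[C]_(n, m)) :
  mx_pos M -> mx_pos (P^t* *m M *m P).
Proof.
move=> [MH Mp]; split; first by rewrite !trmxC_mul trmxCK MH mulmxA.
by move=> v; have := Mp (P *m v); rewrite trmxC_mul !mulmxA.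
Qed.

Lemma mx_pos_diag n (M : 'M[C]_n) i : mx_pos M -> 0 <= M i i.
Proof.
move=> [_ /(_ (delta_mx i 0))].
have -> : (delta_mx i 0 : 'cV[C]_n)^t* = delta_mx 0 i.
  by apply/matrixP => a b; rewrite !mxE rmorph_nat andbC.
by rewrite -rowE -colE !mxE.
Qed.

Lemma mx_pos_diag_mx n (d : 'rV[C]_n) :
  (forall i, 0 <= d 0 i) -> mx_pos (diag_mx d).
Proof.
move=> d_ge0; split.
  rewrite tr_diag_mx map_diag_mx; congr diag_mx; apply/matrixP => i j.
  by rewrite ord1 !mxE; exact: geC0_conj.
move=> v; rewrite mul_mx_diag mxE; apply: sumr_ge0 => k _; rewrite !mxE.
by rewrite mulrAC mulr_ge0 // mulrC mul_conjC_ge0.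
Qed.

Lemma mx_pos_addr_scalar_inj n (s : 'M[C]_n) c (w : 'cV_n) :
  mx_pos s -> 0 < c -> (s + c%:M) *m w = 0 -> w = 0.
Proof.
move=> [_ s_ge0] c_gt0 sw0.
have : (w^t* *m (s + c%:M) *m w) 0 0 = 0 by rewrite -mulmxA sw0 mulmx0 mxE.
rewrite mulmxDr mulmxDl mul_mx_scalar -scalemxAl mxE [X in _ + X]mxE.
move/eqP; rewrite paddr_eq0 ?s_ge0 ?mulr_ge0 ?cV_norm_ge0 ?ltW //.
by case/andP=> _; rewrite mulf_eq0 gt_eqF //= => /eqP/cV_norm_eq0.
Qed.

Lemma mx_col_eq0 m n (A : 'M[C]_(m, n)) : (forall w : 'cV_n, A *m w = 0) -> A = 0.
Proof.
move=> A0; apply/matrixP => i j.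
by have /matrixP/(_ i 0) := A0 (delta_mx j 0); rewrite -colE !mxE.
Qed.

(* (s - c)(s + c) = s^2 - c^2 = 0, and s + c is injective when c > 0. *)
Lemma mx_pos_sqr_scalar n (s : 'M[C]_n) c :
  mx_pos s -> s *m s = (c * c)%:M -> 0 <= c -> s = c%:M.
Proof.
move=> s_pos ss c_ge0; have [c0|c_neq0] := eqVneq c 0.
  rewrite c0 mul0r raddf0 in ss *; apply: mx_col_eq0 => w; apply: cV_norm_eq0.
  by rewrite trmxC_mul s_pos.1 -mulmxA (mulmxA s) ss mul0mx mulmx0 mxE.
have c_gt0 : 0 < c by rewrite lt_def c_neq0.
apply/eqP; rewrite -subr_eq0; apply/eqP; apply: mx_col_eq0 => w.
apply: (mx_pos_addr_scalar_inj s_pos c_gt0).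
rewrite mulmxA mulmxDl !mulmxBr ss -scalar_mxM scalar_mxC.
by rewrite addrA subrK subrr mul0mx.
Qed.

Lemma hermitian_spectral n (A : 'M[C]_n) : A^t* = A ->
  exists P (d : 'rV[C]_n), P \is unitarymx /\ A = P^t* *m diag_mx d *m P.
Proof.
move=> AH; have A_normal : A \is normalmx by apply/normalmxP; rewrite AH.
have := orthomx_spectralP A_normal.
rewrite invmx_unitary ?spectral_unitarymx // => AE.
by exists (spectralmx A), (spectral_diag A); rewrite spectral_unitarymx.
Qed.

Lemma mulmx_trC_unitary n (P : 'M[C]_n) : P \is unitarymx -> P^t* *m P = 1%:M.
Proof. by move=> PU; rewrite -[_ *m _]mul1mx mulmxA mulmxKtV. Qed.

Lemma conj_unitaryK n (P X : 'M[C]_n) :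
  P \is unitarymx -> P *m (P^t* *m X *m P) *m P^t* = X.
Proof. by move=> PU; rewrite !mulmxA (unitarymxP PU) mul1mx mulmxtVK. Qed.

Lemma conj_unitaryM n (P X Y : 'M[C]_n) : P \is unitarymx ->
  (P^t* *m X *m P) *m (P^t* *m Y *m P) = P^t* *m (X *m Y) *m P.
Proof. by move=> PU; rewrite !mulmxA mulmxtVK // !mulmxA. Qed.

Lemma conj_unitary_inj n (P X Y : 'M[C]_n) : P \is unitarymx ->
  P^t* *m X *m P = P^t* *m Y *m P -> X = Y.
Proof. by move=> PU /(congr1 (fun Z => P *m Z *m P^t*)); rewrite /= !conj_unitaryK. Qed.

Lemma mx_pos_spectral_ge0 n (A P : 'M[C]_n) (d : 'rV[C]_n) :
  P \is unitarymx -> mx_pos A -> A = P^t* *m diag_mx d *m P ->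
  forall i, 0 <= d 0 i.
Proof.
move=> PU A_pos AE i; have := mx_pos_diag i (mx_pos_conj (P^t*) A_pos).
by rewrite trmxCK AE conj_unitaryK // mxE eqxx mulr1n.
Qed.

Lemma det_mx_pos_ge0 n (A : 'M[C]_n) : mx_pos A -> 0 <= \det A.
Proof.
move=> A_pos; have [P [d [PU AE]]] := hermitian_spectral A_pos.1.
have PP : \det (P^t*) * \det P = 1 by rewrite -det_mulmx mulmx_trC_unitary ?det1.
rewrite AE !det_mulmx mulrAC PP mul1r det_diag prodr_ge0 // => i _.
exact: mx_pos_spectral_ge0 PU A_pos AE i.
Qed.

Lemma diag_mx_comm_sqr n (M : 'M[C]_n) (d : 'rV[C]_n) : (forall i, 0 <= d 0 i) ->
  M *m (diag_mx d *m diag_mx d) = (diag_mx d *m diag_mx d) *m M ->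
  M *m diag_mx d = diag_mx d *m M.
Proof.
move=> d_ge0 /matrixP Md2; apply/matrixP => i j; have := Md2 i j.
rewrite mulmxA -[in RHS]mulmxA !mul_mx_diag !mul_diag_mx !mxE.
have [->|dij] := eqVneq (d 0 i) (d 0 j); first by move=> _; rewrite mulrC.
move=> /eqP; rewrite -subr_eq0.
have -> : M i j * d 0 j * d 0 j - d 0 i * (d 0 i * M i j) =
          M i j * (d 0 j ^+ 2 - d 0 i ^+ 2) by ring.
rewrite mulf_eq0 subr_eq0 eqrXn2 // [d 0 j == _]eq_sym (negbTE dij) orbF => /eqP ->.
by rewrite mul0r mulr0.
Qed.

Lemma mx_pos_comm_sqr n (s m : 'M[C]_n) : mx_pos s ->
  m *m (s *m s) = (s *m s) *m m -> m *m s = s *m m.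
Proof.
move=> s_pos; have [P [d [PU sE]]] := hermitian_spectral s_pos.1.
have d_ge0 := mx_pos_spectral_ge0 PU s_pos sE.
have mE : m = P^t* *m (P *m m *m P^t*) *m P.
  by rewrite -{1}(conj_unitaryK m (_ : P^t* \is unitarymx)) ?trmxCK ?trmxC_unitary.
rewrite sE mE !conj_unitaryM // => /(conj_unitary_inj PU).
by move=> /(diag_mx_comm_sqr d_ge0) ->.
Qed.

End PositiveMatrices.

Section AbsoluteValue.
Variable C : numClosedFieldType.

Lemma mx_abs_spec n (M : 'M[C]_n) :
  mx_pos (mx_abs M) /\ mx_abs M *m mx_abs M = M^t* *m M.
Proof.
apply: (epsilon_spec (inhabits 0) (fun s => mx_pos s /\ s *m s = M^t* *m M)).
have [P [d [PU ME]]] := hermitian_spectral (mx_pos_gram M).1.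
have d_ge0 := mx_pos_spectral_ge0 PU (mx_pos_gram M) ME.
exists (P^t* *m diag_mx (map_mx sqrtC d) *m P); split.
  by apply/mx_pos_conj/mx_pos_diag_mx => i; rewrite mxE sqrtC_ge0.
rewrite conj_unitaryM // ME; congr (_ *m _ *m _).
apply/matrixP => i j; rewrite mul_diag_mx !mxE.
by case: eqP => [->|]; rewrite ?mulr1n ?mulr0n ?mulr0 // -expr2 sqrtCK.
Qed.

Lemma mx_abs_scalar n (M : 'M[C]_n) (c : C) :
  M^t* *m M = (c * c)%:M -> 0 <= c -> mx_abs M = c%:M.
Proof.
have [abs_pos abs_sqr] := mx_abs_spec M.
by move=> MM c_ge0; apply: mx_pos_sqr_scalar; rewrite ?abs_sqr.
Qed.

End AbsoluteValue.

Section Strictness.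
Variable C : numClosedFieldType.

Lemma unitmx_lkerP n (M : 'M[C]_n) :
  M \in unitmx <-> forall v : 'rV_n, v *m M = 0 -> v = 0.
Proof.
split=> [M_unit v /eqP|M_inj].
  by rewrite mulmx_free_eq0 ?row_free_unit // => /eqP.
rewrite -row_free_unit -kermx_eq0; apply/eqP/row_matrixP => i.
by rewrite row0; apply: M_inj; rewrite -row_mul mulmx_ker row0.
Qed.

Lemma range_proj_spec n (x : 'M[C]_n) : let p := range_proj x in
  p^t* = p /\ p *m p = p /\ (p^T == x^T)%MS.
Proof.
apply: (epsilon_spec (inhabits 0) (fun p => p^t* = p /\ p *m p = p /\ _)).
pose B := schmidt (row_base x^T).
have BU : B \is unitarymx by apply/schmidt_unitarymx/rank_leq_col.
pose Q := B^t* *m B.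
have QH : Q^t* = Q by rewrite trmxC_mul trmxCK.
have QB : (Q :=: B)%MS.
  have BQ : B *m Q = B by rewrite mulmxA (unitarymxP BU) mul1mx.
  by apply/eqmxP; rewrite submxMl -{1}BQ submxMl.
exists Q^T; split; [|split].
- by rewrite -map_trmx QH.
- by rewrite -trmx_mul /Q mulmxA mulmxtVK.
rewrite trmxK; apply/eqmxP; apply: eqmx_trans QB _.
apply: eqmx_trans (eqmx_schmidt_free (row_base_free _)) _; exact: eq_row_base.
Qed.

Lemma range_proj1_unit n (x : 'M[C]_n) : range_proj x = 1%:M -> x \in unitmx.
Proof.
have [_ [_ /andP[px _]]] := range_proj_spec x.
by move=> p1; move: px; rewrite p1 trmx1 -unitmx_tr -row_full_unit -sub1mx.
Qed.

Lemma strict_unit n (a : 'M[C]_n) :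
  strict a -> a \in unitmx /\ 1%:M - a \in unitmx.
Proof.
by case=> _ [/eqP s0 /eqP n0]; split; apply/range_proj1_unit/esym/eqP;
  rewrite -subr_eq0.
Qed.

End Strictness.

Section Compression.
Variable C : numClosedFieldType.

(* [u] plays the role of |a - b|, and then [1 - u] that of |1 - a - b|; the
   invariant is phrased through squares and commutation so that it passes to
   compressions onto invariant subspaces. *)
Record strict_abs_compat n (a b u : 'M[C]_n) : Prop := {
  pos_a : mx_pos a; pos_1a : mx_pos (1%:M - a);
  pos_b : mx_pos b; pos_1b : mx_pos (1%:M - b);
  pos_u : mx_pos u; pos_1u : mx_pos (1%:M - u);
  comm_ua : u *m a = a *m u; comm_ub : u *m b = b *m u;
  sqr_sub : (a - b) *m (a - b) = u *m u;
  sqr_compl : (1%:M - a - b) *m (1%:M - a - b) = (1%:M - u) *m (1%:M - u);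
  unit_a : a \in unitmx; unit_1a : 1%:M - a \in unitmx;
  unit_b : b \in unitmx; unit_1b : 1%:M - b \in unitmx }.

Definition compress r n (V : 'M[C]_(r, n)) (M : 'M[C]_n) : 'M[C]_r :=
  V *m M *m V^t*.

Variables (r n : nat) (V : 'M[C]_(r, n)).
Hypothesis V_unitary : V \is unitarymx.

Lemma compressM M N : stablemx V M ->
  compress V (M *m N) = compress V M *m compress V N.
Proof.
by case/submxP=> K KM; rewrite /compress !mulmxA KM mulmxtVK.
Qed.

Lemma compressB M N : compress V (M - N) = compress V M - compress V N.
Proof. by rewrite /compress mulmxBr mulmxBl. Qed.

Lemma compress1 : compress V 1%:M = 1%:M.
Proof. by rewrite /compress mulmx1 (unitarymxP V_unitary). Qed.

Lemma compress1B M : 1%:M - compress V M = compress V (1%:M - M).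
Proof. by rewrite compressB compress1. Qed.

Lemma compress_pos M : mx_pos M -> mx_pos (compress V M).
Proof. by move/(mx_pos_conj (V^t*)); rewrite trmxCK. Qed.

Lemma compress_unit M : stablemx V M -> M \in unitmx -> compress V M \in unitmx.
Proof.
case/submxP=> K KM /unitmx_lkerP M_inj; apply/unitmx_lkerP => v.
rewrite /compress KM mulmxtVK // => vK0.
have /M_inj vV0 : v *m V *m M = 0 by rewrite -mulmxA KM mulmxA vK0 mul0mx.
by rewrite -(mulmxtVK v V_unitary) vV0 mul0mx.
Qed.

Lemma strict_abs_compat_compress (a b u : 'M[C]_n) : strict_abs_compat a b u ->
  stablemx V a -> stablemx V b -> stablemx V u ->
  strict_abs_compat (compress V a) (compress V b) (compress V u).
Proof.
move=> H Va Vb Vu; have V1 : stablemx V 1%:M := stablemxC V 1.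
have VB M N : stablemx V M -> stablemx V N -> stablemx V (M - N).
  by move=> VM VN; rewrite stablemxD ?stablemxN.
split; rewrite ?compress1B -?compressB -?compressM ?VB ?(comm_ua H) ?(comm_ub H);
  rewrite ?(sqr_sub H) ?(sqr_compl H) //;
  first [apply: compress_pos | apply: compress_unit; rewrite ?VB //]; by case: H.
Qed.

End Compression.

Section Eigenvectors.
Variable C : numClosedFieldType.
Implicit Types (c d : C).

(* [(1 + xi - tau) / 2] and [(1 - xi - tau) / 2] are the eigenvalues of [a]
   and [b] on a common eigenvector of [a - b], [1 - a - b] and [u]. *)
Lemma compat_eigenvalues (xi tau mu : C) :
  xi ^+ 2 = mu ^+ 2 -> tau ^+ 2 = (1 - mu) ^+ 2 ->
  [|| 1 + xi - tau == 0, 1 + xi - tau == 2, 1 - xi - tau == 0 | 1 - xi - tau == 2].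
Proof.
move=> /eqP; rewrite eqf_sqr => /orP[]/eqP-> /eqP; rewrite eqf_sqr => /orP[]/eqP->.
- by rewrite subrr eqxx !orbT.
- by rewrite (_ : 1 + mu - - (1 - mu) = 2) ?eqxx ?orbT //; ring.
- by rewrite (_ : 1 + - mu - (1 - mu) = 0) ?eqxx //; ring.
- by rewrite (_ : 1 - - mu - - (1 - mu) = 2) ?eqxx ?orbT //; ring.
Qed.

Section LeftEigenvector.
Variables (n : nat) (v : 'rV[C]_n).
Hypothesis v_neq0 : v != 0.

Lemma scalev_inj c d : c *: v = d *: v -> c = d.
Proof.
by move/eqP; rewrite -subr_eq0 -scalerBl scaler_eq0 (negbTE v_neq0) orbF subr_eq0 => /eqP.
Qed.

Lemma eigen_sqr (M : 'M[C]_n) c : v *m M = c *: v -> v *m (M *m M) = c ^+ 2 *: v.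
Proof. by move=> vM; rewrite mulmxA vM -scalemxAl vM scalerA. Qed.

Lemma eigen_1B (M : 'M[C]_n) c : v *m M = c *: v -> v *m (1%:M - M) = (1 - c) *: v.
Proof. by move=> vM; rewrite mulmxBr mulmx1 vM scalerBl scale1r. Qed.

Lemma eigen_unit_neq0 (M : 'M[C]_n) c : M \in unitmx -> v *m M = c *: v -> c != 0.
Proof.
move=> /unitmx_lkerP M_inj vM; apply: contra_neq v_neq0 => c0.
by apply: M_inj; rewrite vM c0 scale0r.
Qed.

End LeftEigenvector.

Lemma no_common_eigenvector n (a b u : 'M[C]_n) (v : 'rV_n) (xi tau mu : C) :
  strict_abs_compat a b u -> v != 0 ->
  v *m (a - b) = xi *: v -> v *m (1%:M - a - b) = tau *: v -> v *m u = mu *: v ->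
  False.
Proof.
move=> H v_neq0 vx vy vu.
have xi_mu : xi ^+ 2 = mu ^+ 2.
  by apply: (scalev_inj v_neq0); rewrite -(eigen_sqr vx) (sqr_sub H) (eigen_sqr vu).
have tau_mu : tau ^+ 2 = (1 - mu) ^+ 2.
  apply: (scalev_inj v_neq0).
  by rewrite -(eigen_sqr vy) (sqr_compl H) (eigen_sqr (eigen_1B vu)).
have eigen_half (M : 'M[C]_n) c :
    M = 2^-1 *: (1%:M + c *: (a - b) - (1%:M - a - b)) ->
    v *m M = (2^-1 * (1 + c * xi - tau)) *: v.
  move=> ->; rewrite -scalemxAr mulmxBr mulmxDr -scalemxAr mulmx1 vx vy.
  by rewrite scalerA -{1}[v]scale1r -scalerDl -scalerBl scalerA.
have va : v *m a = (2^-1 * (1 + xi - tau)) *: v.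
  by rewrite -[xi]mul1r; apply: eigen_half; apply/matrixP => i j; rewrite !mxE; field.
have vb : v *m b = (2^-1 * (1 - xi - tau)) *: v.
  by rewrite -mulN1r; apply: eigen_half; apply/matrixP => i j; rewrite !mxE; field.
have half2 : 1 - 2^-1 * 2 = 0 :> C by rewrite mulVf ?subrr ?pnatr_eq0.
case/or4P: (compat_eigenvalues xi_mu tau_mu) => /eqP e.
- by have := eigen_unit_neq0 v_neq0 (unit_a H) va; rewrite e mulr0 eqxx.
- by have := eigen_unit_neq0 v_neq0 (unit_1a H) (eigen_1B va); rewrite e half2 eqxx.
- by have := eigen_unit_neq0 v_neq0 (unit_b H) vb; rewrite e mulr0 eqxx.
- by have := eigen_unit_neq0 v_neq0 (unit_1b H) (eigen_1B vb); rewrite e half2 eqxx.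
Qed.

End Eigenvectors.

Section TwoByTwo.
Variable C : numClosedFieldType.
Implicit Types (M N : 'M[C]_2).

Lemma ord2P (i : 'I_2) : i = 0 \/ i = 1.
Proof. by case: i => [[|[|//]]] ?; [left|right]; apply: val_inj. Qed.

Lemma lift0_ord2 : lift ord0 (ord0 : 'I_1) = 1 :> 'I_2.
Proof. exact: val_inj. Qed.

Lemma mx2P M N : M 0 0 = N 0 0 -> M 0 1 = N 0 1 -> M 1 0 = N 1 0 -> M 1 1 = N 1 1 ->
  M = N.
Proof.
move=> e00 e01 e10 e11; apply/matrixP => i j.
by case: (ord2P i) => ->; case: (ord2P j) => ->.
Qed.

Lemma mulmx2E M N i j : (M *m N) i j = M i 0 * N 0 j + M i 1 * N 1 j.
Proof. by rewrite mxE !big_ord_recl big_ord0 addr0 lift0_ord2. Qed.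

Lemma mxtrace2 M : \tr M = M 0 0 + M 1 1.
Proof. by rewrite /mxtrace !big_ord_recl big_ord0 addr0 lift0_ord2. Qed.

Lemma det_mx2 M : \det M = M 0 0 * M 1 1 - M 0 1 * M 1 0.
Proof.
rewrite (expand_det_row _ 0) !big_ord_recl big_ord0 addr0 /cofactor !det_mx11 !mxE.
rewrite lift0_ord2 (_ : lift _ _ = 0 :> 'I_2); last exact: val_inj.
by rewrite /= expr0 expr1 mul1r mulN1r mulrN.
Qed.

Lemma scalar_mx2E (c : C) (i j : 'I_2) : (c%:M : 'M[C]_2) i j = if i == j then c else 0.
Proof. by rewrite mxE; case: eqP. Qed.

(* Off the diagonal, M^2 = s gives M01 tr M = M10 tr M = 0, and on it
   (M00 - M11) tr M = 0. *)
Lemma sqr_scalar_mxtrace M (s : C) :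
  M *m M = s%:M -> (forall d : C, M != d%:M) -> \tr M = 0.
Proof.
move=> /matrixP MM M_nscalar; rewrite mxtrace2; apply/eqP; apply: contraT => t_neq0.
have tr_mulI (x y : C) : x * (M 0 0 + M 1 1) = y * (M 0 0 + M 1 1) -> x = y.
  by move/mulIf; apply.
have e i j : M i 0 * M 0 j + M i 1 * M 1 j = if i == j then s else 0.
  by rewrite -mulmx2E MM scalar_mx2E.
have M01 : M 0 1 = 0 by apply: tr_mulI; rewrite mul0r -[RHS](e 0 1); ring.
have M10 : M 1 0 = 0 by apply: tr_mulI; rewrite mul0r -[RHS](e 1 0); ring.
have M11 : M 1 1 = M 0 0.
  apply/eqP; rewrite -subr_eq0; apply/eqP/tr_mulI; rewrite mul0r.
  transitivity ((M 1 0 * M 0 1 + M 1 1 * M 1 1) - (M 0 0 * M 0 0 + M 0 1 * M 1 0)).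
    by rewrite M01 M10; ring.
  by rewrite (e 0 0) (e 1 1) !eqxx subrr.
by have /negP[] := M_nscalar (M 0 0); apply/eqP/mx2P; rewrite !scalar_mx2E.
Qed.

(* 1/4 - det M = |M00 - 1/2|^2 + |M01|^2 for Hermitian M of trace 1. *)
Lemma det_lt_quarter M :
  M^t* = M -> \tr M = 1 -> M != 2^-1%:M -> \det M < 4^-1.
Proof.
rewrite mxtrace2 => MH tr1 M_neq.
have M10 : M 1 0 = (M 0 1)^* by rewrite -{1}MH !mxE.
have M00 : (M 0 0)^* = M 0 0 by rewrite -{2}MH !mxE.
have M11 : M 1 1 = 1 - M 0 0 by rewrite -tr1; ring.
have half_conj : (M 0 0 - 2^-1)^* = M 0 0 - 2^-1.
  by rewrite rmorphB fmorphV rmorph_nat; congr (_ - _); exact: M00.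
have -> : \det M = 4^-1 - ((M 0 0 - 2^-1) * (M 0 0 - 2^-1)^* + M 0 1 * (M 0 1)^*).
  by rewrite half_conj det_mx2 M11 M10; field.
rewrite gtrDl oppr_lt0 lt_def addr_ge0 ?mul_conjC_ge0 // andbT.
apply: contra M_neq; rewrite paddr_eq0 ?mul_conjC_ge0 // !mul_conjC_eq0 subr_eq0.
case/andP=> /eqP a0 /eqP b0; apply/eqP/mx2P; rewrite !scalar_mx2E //=.
- by rewrite M10 b0 conjC0.
- by rewrite M11 a0; field.
Qed.

End TwoByTwo.

Section BaseCase.
Variable C : numClosedFieldType.

Lemma exists_eigenvector n (M : 'M[C]_n) : (0 < n)%N ->
  exists2 v : 'rV_n, v != 0 & exists c, v *m M = c *: v.
Proof.
by case/(eigenvalue_closed M)=> c /eigenvalueP[v vM v_neq0]; exists v => //; exists c.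
Qed.

Lemma mx_pos_unit_det_gt0 n (M : 'M[C]_n) : mx_pos M -> M \in unitmx -> 0 < \det M.
Proof. by move=> M_pos; rewrite unitmxE unitfE lt_def det_mx_pos_ge0 // andbT. Qed.

Lemma in_S_of_mxtrace (M : 'M[C]_2) :
  mx_effect M -> M \in unitmx -> \tr M = 1 -> M != 2^-1%:M -> in_S M.
Proof.
move=> M_eff M_unit trM M_neq; split=> //; split=> //; split.
  exact: mx_pos_unit_det_gt0 M_eff.1 M_unit.
exact: det_lt_quarter M_eff.1.1 trM M_neq.
Qed.

Section ScalarModulus.
Variables (n : nat) (a b : 'M[C]_n.+1) (nu : C).
Hypothesis H : strict_abs_compat a b nu%:M.

Lemma strict_abs_compat_not_affine (c d : C) : 1%:M - a - b != c *: (a - b) + d%:M.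
Proof.
apply/eqP=> yE; have [v v_neq0 [xi vx]] := exists_eigenvector (a - b) (ltn0Sn n).
apply: (no_common_eigenvector (tau := c * xi + d) H v_neq0 vx _ (mul_mx_scalar nu v)).
by rewrite yE mulmxDr -scalemxAr vx mul_mx_scalar scalerA scalerDl.
Qed.

Lemma strict_abs_compat_not_scalar (d : C) : a - b != d%:M.
Proof.
apply/eqP=> xE; have [v v_neq0 [tau vy]] := exists_eigenvector (1%:M - a - b) (ltn0Sn n).
apply: (no_common_eigenvector H v_neq0 _ vy (mul_mx_scalar nu v)).
by rewrite xE mul_mx_scalar.
Qed.

End ScalarModulus.

Lemma strict_abs_compat_in_S (A B : 'M[C]_2) (nu : C) :
  strict_abs_compat A B nu%:M -> [/\ in_S A, in_S B & abs_compatible A B].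
Proof.
move=> H; set X := A - B; set Y := 1%:M - A - B.
have nu_ge0 : 0 <= nu by have := mx_pos_diag 0 (pos_u H); rewrite mxE eqxx.
have nu_le1 : 0 <= 1 - nu by have := mx_pos_diag 0 (pos_1u H); rewrite !mxE eqxx.
have XX : X *m X = (nu * nu)%:M by rewrite (sqr_sub H) -scalar_mxM.
have YY : Y *m Y = ((1 - nu) * (1 - nu))%:M by rewrite (sqr_compl H) -raddfB -scalar_mxM.
have trX := sqr_scalar_mxtrace XX (strict_abs_compat_not_scalar H).
have trY : \tr Y = 0.
  apply: (sqr_scalar_mxtrace YY) => d.
  by rewrite -[d%:M]add0r -(scale0r X) (strict_abs_compat_not_affine H).
have trM (M : 'M[C]_2) (c : C) : M = 2^-1 *: (1%:M + c *: X - Y) -> \tr M = 1.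
  by move=> ->; rewrite mxtraceZ linearB /= mxtraceD mxtraceZ trX trY mxtrace1; field.
have half_half : 1 - 2^-1 = 2^-1 :> C by field.
split.
- apply: (in_S_of_mxtrace (conj (pos_a H) (pos_1a H)) (unit_a H)).
    by apply: (trM _ 1); apply/matrixP => i j; rewrite !mxE; field.
  apply: contraNneq (strict_abs_compat_not_affine H 1 0) => A_half; apply/eqP.
  by rewrite scale1r raddf0 addr0 A_half -raddfB half_half.
- apply: (in_S_of_mxtrace (conj (pos_b H) (pos_1b H)) (unit_b H)).
    by apply: (trM _ (-1)); apply/matrixP => i j; rewrite !mxE; field.
  apply: contraNneq (strict_abs_compat_not_affine H (-1) 0) => B_half; apply/eqP.
  by rewrite scaleN1r raddf0 addr0 B_half opprB addrAC -raddfB half_half.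
have XH : X^t* = X by rewrite trmxC_sub (pos_a H).1 (pos_b H).1.
have YH : Y^t* = Y by rewrite !trmxC_sub trmxC1 (pos_a H).1 (pos_b H).1.
rewrite /abs_compatible -/X -/Y (mx_abs_scalar _ nu_ge0) ?XH //.
by rewrite (mx_abs_scalar _ nu_le1) ?YH // -raddfD addrC subrK.
Qed.

End BaseCase.

Section Blocks.
Variable C : numClosedFieldType.

Lemma dsum2_block r (F : nat -> 'M[C]_2) :
  dsum2 (2 + r) F = block_mx (F 0%N) 0 0 (dsum2 r (fun j => F j.+1)).
Proof.
have half0 (k : 'I_2) : k./2 = 0%N by case: (ord2P k) => ->.
have inord_odd (k : 'I_2) : inord (odd k) = k.
  by case: (ord2P k) => ->; apply: val_inj; rewrite /= inordK.
apply/matrixP => i j; rewrite mxE.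
case: (split_ordP i) => i' ->; case: (split_ordP j) => j' ->.
- by rewrite block_mxEul /= !half0 eqxx !inord_odd.
- by rewrite block_mxEur mxE /= half0.
- by rewrite block_mxEdl mxE /= half0.
- by rewrite block_mxEdr mxE /= !add0n !negbK eqSS.
Qed.

Lemma col_mx_unitary r1 r2 n (W1 : 'M[C]_(r1, n)) (W2 : 'M[C]_(r2, n)) :
  col_mx W1 W2 \is unitarymx ->
  [/\ W1 \is unitarymx, W1 *m W2^t* = 0, W2 *m W1^t* = 0 & W2 \is unitarymx].
Proof.
move/unitarymxP; rewrite tr_col_mx map_row_mx mul_col_row (scalar_mx_block r1 r2).
by case/eq_block_mx=> /unitarymxP-> -> -> /unitarymxP->.
Qed.

Lemma compress_col_mx r1 r2 (W1 : 'M[C]_(r1, r1 + r2)) (W2 : 'M[C]_(r2, r1 + r2))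
    (M : 'M[C]_(r1 + r2)) :
  col_mx W1 W2 \is unitarymx -> M^t* = M -> stablemx W1 M ->
  stablemx W2 M /\
  compress (col_mx W1 W2) M = block_mx (compress W1 M) 0 0 (compress W2 M).
Proof.
move=> WU MH /submxP[K KM]; have [W1U W12 W21 W2U] := col_mx_unitary WU.
have e12 : W1 *m M *m W2^t* = 0 by rewrite KM -mulmxA W12 mulmx0.
have e21 : W2 *m M *m W1^t* = 0.
  have := congr1 (fun X => X^t*) e12.
  by rewrite /= !trmxC_mul trmxCK MH trmx0 map_mx0 mulmxA.
split.
  have WtW : W1^t* *m W1 + W2^t* *m W2 = 1%:M.
    by rewrite -mul_row_col -map_row_mx -tr_col_mx mulmx_trC_unitary.
  by rewrite -[W2 *m M]mulmx1 -WtW mulmxDr !mulmxA e21 mul0mx add0r submxMl.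
by rewrite /compress tr_col_mx map_row_mx mul_col_mx mul_col_row e12 e21.
Qed.

Lemma block_unitary r1 r2 (w : 'M[C]_r2) : w \is unitarymx ->
  block_mx (1%:M : 'M[C]_r1) 0 0 w \is unitarymx.
Proof.
move=> wU; apply/unitarymxP.
rewrite tr_block_mx map_block_mx mulmx_block !trmx0 !map_mx0 trmxC1.
rewrite !(mulmx1, mul1mx, mulmx0, mul0mx, addr0, add0r) (unitarymxP wU).
by rewrite -scalar_mx_block.
Qed.

Lemma conj_block_unitary r1 r2 (W : 'M[C]_(r1 + r2)) (w : 'M[C]_r2) (M : 'M[C]_(r1 + r2))
    (X1 : 'M[C]_r1) (X2 D2 : 'M[C]_r2) :
  W \is unitarymx -> compress W M = block_mx X1 0 0 X2 -> X2 = w^t* *m D2 *m w ->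
  let P := block_mx 1%:M 0 0 w *m W in M = P^t* *m block_mx X1 0 0 D2 *m P.
Proof.
move=> WU WM X2E P.
have -> : P^t* *m block_mx X1 0 0 D2 *m P =
    W^t* *m ((block_mx 1%:M 0 0 w)^t* *m block_mx X1 0 0 D2 *m block_mx 1%:M 0 0 w) *m W.
  by rewrite trmxC_mul !mulmxA.
have -> : (block_mx 1%:M 0 0 w)^t* *m block_mx X1 0 0 D2 *m block_mx 1%:M 0 0 w =
          block_mx X1 0 0 X2.
  rewrite tr_block_mx map_block_mx !trmx0 !map_mx0 trmxC1 !mulmx_block.
  by rewrite !(mulmx1, mul1mx, mulmx0, mul0mx, addr0, add0r) X2E.
by rewrite -WM /compress !mulmxA mulmx_trC_unitary // mul1mx -mulmxA mulmx_trC_unitary ?mulmx1.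
Qed.

End Blocks.

Section InvariantPlane.
Variable C : numClosedFieldType.

Lemma row_free_col_mx_rV n (v w : 'rV[C]_n) :
  v != 0 -> ~~ (w <= v)%MS -> row_free (col_mx v w).
Proof.
move=> v_neq0 w_notin; have w_neq0 : w != 0.
  by apply: contraNneq w_notin => ->; rewrite sub0mx.
have cap0 : (v :&: w)%MS = 0.
  apply/eqP; suff : (\rank (v :&: w) < \rank w)%N.
    by rewrite rank_rV w_neq0 ltnS leqn0 mxrank_eq0.
  rewrite ltn_neqAle (mxrank_leqif_eq (capmxSr v w)).
  rewrite mxrankS ?capmxSr // andbT; apply: contraNN w_notin => /andP[_ w_cap].
  exact: submx_trans w_cap (capmxSl v w).
by rewrite /row_free -addsmxE mxrank_disjoint_sum // !rank_rV v_neq0 w_neq0.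
Qed.

Lemma unitary_completion m n (E : 'M[C]_(m, n)) :
  exists r (W1 : 'M[C]_(\rank E, n)) (W2 : 'M[C]_(r, n)),
    [/\ (\rank E + r)%N = n, col_mx W1 W2 \is unitarymx & (W1 :=: E)%MS].
Proof.
exists _, (usubmx (schmidt_complete E)), (dsubmx (schmidt_complete E)).
split; first exact: add_rank_ortho.
  by rewrite vsubmxK schmidt_complete_unitarymx.
rewrite /schmidt_complete col_mxKu.
exact: eqmx_trans (eqmx_schmidt_free (row_base_free _)) (eq_row_base _).
Qed.

Lemma exists_invariant_plane n (a b u : 'M[C]_n) :
  strict_abs_compat a b u -> (0 < n)%N ->
  exists2 E : 'M[C]_(2, n), row_free E &
    [/\ stablemx E a, stablemx E b & exists mu, E *m u = mu *: E].
Proof.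
move=> H n_gt0; set x := a - b; set y := 1%:M - a - b; pose h := x *m y + y *m x.
have cux : u *m x = x *m u by rewrite mulmxBr mulmxBl (comm_ua H) (comm_ub H).
have cuy : u *m y = y *m u.
  by rewrite !mulmxBr !mulmxBl mulmx1 mul1mx (comm_ua H) (comm_ub H).
have cxh : x *m h = h *m x.
  rewrite /h mulmxDr mulmxDl mulmxA (sqr_sub H) -(mulmxA y x x) (sqr_sub H) addrC.
  by rewrite !mulmxA; congr (_ + _); rewrite -mulmxA cuy mulmxA cuy.
have cuh : u *m h = h *m u.
  by rewrite /h mulmxDr mulmxDl !mulmxA cux cuy -!mulmxA cux cuy.
have comm : {in [:: u; x; h] &, forall A B, comm_mx A B}.
  by move=> A B; rewrite !inE => /or3P[] /eqP-> /or3P[] /eqP->.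
have [v v_neq0] := common_eigenvector n_gt0 comm.
rewrite /= andbT => /and3P[/sub_rVP[mu vu] /sub_rVP[xi vx] /sub_rVP[eta vh]].
have vyy : v *m y *m y = (1 - mu) ^+ 2 *: v.
  by rewrite -mulmxA (sqr_compl H) (eigen_sqr (eigen_1B vu)).
have vy_notin : ~~ (v *m y <= v)%MS.
  by apply/negP => /sub_rVP[tau vy]; apply: (no_common_eigenvector H v_neq0 vx vy vu).
pose E := col_mx v (v *m y).
have stableE M : (v *m M <= E)%MS -> (v *m y *m M <= E)%MS -> stablemx E M.
  by move=> vM vyM; rewrite /E mul_col_mx col_mx_sub vM vyM.
have v_in : (v <= E)%MS by rewrite -addsmxE addsmxSl.
have vy_in : (v *m y <= E)%MS by rewrite -addsmxE addsmxSr.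
have Ex : stablemx E x.
  apply: stableE; first by rewrite vx scalemx_sub.
  have -> : v *m y *m x = eta *: v + (- xi) *: (v *m y).
    rewrite -mulmxA (_ : y *m x = h - x *m y); last by rewrite /h addrAC subrr add0r.
    by rewrite mulmxBr vh mulmxA vx -scalemxAl scaleNr.
  by rewrite addmx_sub ?scalemx_sub.
have Ey : stablemx E y by apply: stableE; rewrite ?vyy ?scalemx_sub.
have E1 : stablemx E 1%:M := stablemxC E 1.
have Eu : E *m u = mu *: E.
  by rewrite mul_col_mx vu -mulmxA -cuy mulmxA vu -scalemxAl scale_col_mx.
exists E; first exact: row_free_col_mx_rV.
split.
- have -> : a = 2^-1 *: (1%:M + x - y) by apply/matrixP => i j; rewrite !mxE; field.
  rewrite -scalemxAr scalemx_sub //.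
  by apply: stablemxD; [apply: stablemxD | rewrite stablemxN].
- have -> : b = 2^-1 *: (1%:M - x - y) by apply/matrixP => i j; rewrite !mxE; field.
  rewrite -scalemxAr scalemx_sub //.
  by apply: stablemxD; [apply: stablemxD | ]; rewrite ?stablemxN.
by exists mu.
Qed.

End InvariantPlane.

Section Decomposition.
Variable C : numClosedFieldType.

(* The block size is left abstract (it is [\rank E] in the proof), so that
   [W1] needs no cast; [r1 = 2] is recorded as an equation. *)
Lemma split_off_plane n (a b u : 'M[C]_n) :
  strict_abs_compat a b u -> (0 < n)%N ->
  exists r1 r2 (W1 : 'M[C]_(r1, n)) (W2 : 'M[C]_(r2, n)) (nu : C),
    [/\ r1 = 2%N, (r1 + r2)%N = n, col_mx W1 W2 \is unitarymx,
        [/\ stablemx W1 a, stablemx W1 b & stablemx W1 u] & compress W1 u = nu%:M].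
Proof.
move=> H n_gt0; have [E E_free [Ea Eb [mu Eu]]] := exists_invariant_plane H n_gt0.
have [r [W1 [W2 [rn WU W1E]]]] := unitary_completion E.
have [W1U _ _ _] := col_mx_unitary WU.
have W1u : W1 *m u = mu *: W1.
  have /submxP[K ->] : (W1 <= E)%MS by rewrite W1E.
  by rewrite -mulmxA Eu scalemxAr.
exists (\rank E), r, W1, W2, mu; split=> //; first exact/eqP.
  by split; rewrite (eqmxMr _ W1E) W1E // Eu scalemx_sub.
by rewrite /compress W1u -scalemxAl (unitarymxP W1U) scalemx1.
Qed.

Definition dsum2_decomposition n (a b : 'M[C]_n) : Prop :=
  exists k : nat, n = (2 * k)%N /\
    exists (A B : nat -> 'M[C]_2) (w : 'M[C]_n),
      (forall j, (j < k)%N ->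
         [/\ in_S (A j), in_S (B j) & abs_compatible (A j) (B j)]) /\
      w \is unitarymx /\
      a = w ^t* *m dsum2 n A *m w /\
      b = w ^t* *m dsum2 n B *m w.

Lemma dsum2_decomposition0 (a b : 'M[C]_0) : dsum2_decomposition a b.
Proof.
exists 0%N; split=> //; exists (fun=> 0), (fun=> 0), 1%:M; split=> //.
split; first by apply/unitarymxP; rewrite trmxC1 mulmx1.
by split; apply/matrixP => -[].
Qed.

Lemma strict_abs_compat_decomposition n (a b u : 'M[C]_n) :
  strict_abs_compat a b u -> dsum2_decomposition a b.
Proof.
have [m] := ubnP n; elim: m n a b u => // m IH n a b u /ltnSE le_nm H.
have [n0|n_gt0] := posnP n; first by subst n; exact: dsum2_decomposition0.
have [r1 [r2 [W1 [W2 [nu [r1E rn WU [Wa Wb Wu] W1u]]]]]] := split_off_plane H n_gt0.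
subst r1 n; have [W1U _ _ W2U] := col_mx_unitary WU.
have [W2a a_block] := compress_col_mx WU (pos_a H).1 Wa.
have [W2b b_block] := compress_col_mx WU (pos_b H).1 Wb.
have [W2u _] := compress_col_mx WU (pos_u H).1 Wu.
have H1 := strict_abs_compat_compress W1U H Wa Wb Wu.
have H2 := strict_abs_compat_compress W2U H W2a W2b W2u.
rewrite W1u in H1; have [A0_S B0_S AB0] := strict_abs_compat_in_S H1.
have r2_lt_m : (r2 < m)%N by apply: leq_trans le_nm; rewrite addSn ltnS leq_addl.
have [k [r2k [A [B [w [ABk [wU [aE bE]]]]]]]] := IH r2 _ _ _ r2_lt_m H2.
exists k.+1; split; first by rewrite r2k mulnS.
exists (fun j => if j is j'.+1 then A j' else compress W1 a).
exists (fun j => if j is j'.+1 then B j' else compress W1 b).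
exists (block_mx 1%:M 0 0 w *m col_mx W1 W2); split.
  by case=> [|j] //; rewrite ltnS; apply: ABk.
split; first by rewrite mul_unitarymx ?block_unitary.
rewrite !dsum2_block.
by split; [exact: conj_block_unitary WU a_block aE |
           exact: conj_block_unitary WU b_block bE].
Qed.

(* Since |1 - a - b| = 1 - |a - b|, both moduli are functions of u := |a - b|,
   and u commutes with a and b because a positive square root commutes with
   everything that commutes with its square. *)
Lemma abs_compatible_strict n (a b : 'M[C]_n) :
  mx_effect a -> mx_effect b -> strict a -> strict b -> abs_compatible a b ->
  strict_abs_compat a b (mx_abs (a - b)).
Proof.
move=> [a_pos a_le1] [b_pos b_le1] /strict_unit[a_unit a1_unit] /strict_unit[b_unit b1_unit].
rewrite /abs_compatible; set u := mx_abs (a - b) => ac.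
have [u_pos uu] := mx_abs_spec (a - b).
have u1E : mx_abs (1%:M - a - b) = 1%:M - u by apply: (addrI u); rewrite ac addrC subrK.
have [u1_pos u1u1] := mx_abs_spec (1%:M - a - b); rewrite u1E in u1_pos u1u1.
have XH : (a - b)^t* = a - b by rewrite trmxC_sub a_pos.1 b_pos.1.
have YH : (1%:M - a - b)^t* = 1%:M - a - b by rewrite !trmxC_sub trmxC1 a_pos.1 b_pos.1.
have cux : (a - b) *m u = u *m (a - b).
  by apply: mx_pos_comm_sqr => //; rewrite uu XH mulmxA.
have cuy : (1%:M - a - b) *m u = u *m (1%:M - a - b).
  have : (1%:M - a - b) *m (1%:M - u) = (1%:M - u) *m (1%:M - a - b).
    by apply: mx_pos_comm_sqr => //; rewrite u1u1 YH mulmxA.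
  by rewrite [LHS]mulmxBr [RHS]mulmxBl mulmx1 mul1mx => /addrI/oppr_inj.
have comm_u (M : 'M[C]_n) (c : C) : M = 2^-1 *: (1%:M + c *: (a - b) - (1%:M - a - b)) ->
    u *m M = M *m u.
  move=> ->; rewrite -scalemxAr -scalemxAl; congr (_ *: _).
  by rewrite mulmxBr mulmxDr mulmxBl mulmxDl mulmx1 mul1mx -!scalemxAr -!scalemxAl cux cuy.
split=> //; rewrite ?uu ?u1u1 ?XH ?YH //.
- by apply: (comm_u _ 1); apply/matrixP => i j; rewrite !mxE; field.
- by apply: (comm_u _ (-1)); apply/matrixP => i j; rewrite !mxE; field.
Qed.

End Decomposition.

Unset Implicit Arguments.

Theorem theorem3p9 (R : realType) (n : nat) (a b : 'M[R[i]]_n) :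
  mx_effect a -> mx_effect b -> strict a -> strict b ->
  abs_compatible a b ->
  exists k : nat, n = (2 * k)%N /\
    exists (A B : nat -> 'M[R[i]]_2) (w : 'M[R[i]]_n),
      (forall j, (j < k)%N ->
         [/\ in_S (A j), in_S (B j) & abs_compatible (A j) (B j)]) /\
      w \is unitarymx /\
      a = w ^t* *m dsum2 n A *m w /\
      b = w ^t* *m dsum2 n B *m w.
Proof.
move=> a_eff b_eff a_strict b_strict ac.
apply: strict_abs_compat_decomposition.
exact: abs_compatible_strict a_eff b_eff a_strict b_strict ac.
Qed.
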